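(* There is a constant $C>0$ depending only on $\lambda$ such that: (i) for all $m<n$, $Q\in\mathcal D_m$, $R\in\mathcal D_n$ with $R\subset Q$, one has $|S_R-S_Q-S_{Q,R}|\le C\,a_m$; (ii) for all $m\le n$, $Q\in\mathcal D_m$, $\tilde R\in\mathcal D_n$, $R\in\mathcal D_{n+1}$ with $R\subset\tilde R\subset Q$, one has $|S_{Q,R}-S_{Q,\tilde R}|\le C\,a_n$.
   Context: Fix $(\lambda_n)_{n\ge1}$ and $\lambda$ with $\frac14\le\lambda_n\le\lambda<\frac12$. Starting from $Q_0=[0,1]^2\subset\mathbb{C}$, inductively replace each square of generation $n-1$ by its $4$ axis-parallel corner subsquares of side ratio $\lambda_n$; generation $n$ consists of $4^n$ closed squares of side $s_n=\lambda_1\cdots\lambda_n$ ($s_0=1$), forming the family $\mathcal D_n$. $K=\bigcap_n\bigcup_{Q\in\mathcal D_n}Q$, $\mu$ is the Borel probability measure on $K$ giving mass $4^{-n}$ to each $Q\in\mathcal D_n$, and $a_n=1/(4^ns_n)$. Let $C(z)=1/z$. For $Q\in\mathcal D_n$ set $S_Q=\frac{1}{\mu(Q)}\int_Q\int_{K\setminus Q}C(z-y)\,d\mu(y)\,d\mu(z)$. For $R\subset Q$ with $Q,R\in\mathcal D$ define the relative martingale $S_{Q,R}=\frac{1}{\mu(R)}\int_R\int_{Q\setminus R}C(z-y)\,d\mu(y)\,d\mu(z)$ (so $S_{Q,Q}=0$). *)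

From HB Require Import structures.
From mathcomp Require Import all_boot all_order all_algebra.
From mathcomp Require Import all_classical all_reals all_analysis.
Set Implicit Arguments. Unset Strict Implicit. Unset Printing Implicit Defensive.
Import Order.TTheory GRing.Theory Num.Theory.
Local Open Scope classical_set_scope.
Local Open Scope ring_scope.

Section Cantor.
Variable R : realType.
Variable lam : nat -> R. (* lam k = lambda_k, only k >= 1 is used *)

Definition side (n : nat) : R := \prod_(1 <= k < n.+1) lam k.

Definition a_ (n : nat) : R := 1 / (4%:R ^+ n * side n).

(* a square of generation n is coded by a word of digits in {0,1,2,3} of
   length n; digit d at position k (0-based) selects the corner subsquare
   at generation k+1: x-offset (odd d), y-offset (1 < d). *)
Definition bitx (d : 'I_4) : R := (odd d)%:R.
Definition bity (d : 'I_4) : R := (1 < d)%N%:R.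

Definition cornerx (w : seq 'I_4) : R :=
  \sum_(k < size w) bitx (nth ord0 w k) * (side k * (1 - lam k.+1)).
Definition cornery (w : seq 'I_4) : R :=
  \sum_(k < size w) bity (nth ord0 w k) * (side k * (1 - lam k.+1)).

Definition square (w : seq 'I_4) : set (R * R) :=
  [set z | cornerx w <= z.1 <= cornerx w + side (size w) /\
           cornery w <= z.2 <= cornery w + side (size w)].

Definition inD (n : nat) (Q : set (R * R)) : Prop :=
  exists w : seq 'I_4, size w = n /\ Q = square w.

Definition Kset : set (R * R) := [set z | forall n, exists Q, inD n Q /\ Q z].

(* C(z - y) = 1/(z - y), written out in real and imaginary parts,
   identifying (x1,x2) : R * R with x1 + i x2. *)
Definition cauchy_re (z y : R * R) : R :=
  (z.1 - y.1) / ((z.1 - y.1) ^+ 2 + (z.2 - y.2) ^+ 2).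
Definition cauchy_im (z y : R * R) : R :=
  - (z.2 - y.2) / ((z.1 - y.1) ^+ 2 + (z.2 - y.2) ^+ 2).

Definition cmod (u v : R) : R := Num.sqrt (u ^+ 2 + v ^+ 2).

End Cantor.

Section Sums.
Variables (R : realType) (mu : {measure set (R * R)%type -> \bar R}).

Definition avg_iint (A B : set (R * R)) (f : R * R -> R * R -> R) : R :=
  (fine (mu A))^-1 * Rintegral mu A (fun z => Rintegral mu B (fun y => f z y)).

Definition S_re (lam : nat -> R) (Q : set (R * R)) : R :=
  avg_iint Q (Kset lam `\` Q) (@cauchy_re R).
Definition S_im (lam : nat -> R) (Q : set (R * R)) : R :=
  avg_iint Q (Kset lam `\` Q) (@cauchy_im R).

Definition SQR_re (Q Rs : set (R * R)) : R := avg_iint Rs (Q `\` Rs) (@cauchy_re R).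
Definition SQR_im (Q Rs : set (R * R)) : R := avg_iint Rs (Q `\` Rs) (@cauchy_im R).
End Sums.

(* Fix generation ratios 1/4 <= lam n <= lambda < 1/2 and set e = 1 - 2 lambda.
   The proof rests on one geometric fact and one analytic fact.

   Separation: if z lies in a square of generation n and y lies in K but not
   in that square, let k < n be the first generation at which the codes of
   their squares differ; then z and y are e s_k apart in one coordinate.
   Hence C(z - y) is bounded by (e s_k)^-1, and on the square it is Lipschitz
   in z with constant 2 / (e s_k)^2 (both for real and imaginary parts).

   Potentials: for a set B of points of K lying outside a square P of
   generation n, the potential G_B(z) = \int_B C(z - y) dmu(y) oscillates on P
   by at most  \sum_(k < n) 2 s_n / (e s_k)^2 4^-k <= D a_n  (the sum is
   geometric since 4 lambda^2 < 1).  All the quantities of the theorem are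
   averages over squares of such potentials, so
   (i)  S_R - S_{Q,R} and S_Q are both averages of G_{K\Q}, over R and over Q,
        hence both within D a_m of G_{K\Q}(z0) for a point z0 of R;
   (ii) S_{Q,R} averages G_{Q\Rt} + G_{Rt\R} over R, S_{Q,Rt} averages G_{Q\Rt}
        over Rt, and |G_{Rt\R}| <= (e s_n)^-1 mu(Rt) = e^-1 a_n. *)

From HB Require Import structures.
From mathcomp Require Import all_boot all_order all_algebra.
From mathcomp Require Import all_classical all_reals all_analysis.
From mathcomp Require Import ring lra measurable_realfun.
Import Order.TTheory GRing.Theory Num.Theory.
Local Open Scope classical_set_scope.
Local Open Scope ring_scope.
Set Implicit Arguments. Unset Strict Implicit. Unset Printing Implicit Defensive.

Section KernelEstimates.
Variable R : realType.
Local Notation T := (R * R)%type.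

Definition separated (z y : T) (g : R) := g <= `|z.1 - y.1| \/ g <= `|z.2 - y.2|.

Definition kernel_bounded (f : T -> T -> R) :=
  forall z y g, 0 < g -> separated z y g -> `|f z y| <= g^-1.

Definition kernel_lipschitz (f : T -> T -> R) :=
  forall z z' y g s, 0 < g -> 0 <= s -> separated z y g -> separated z' y g ->
  `|z.1 - z'.1| <= s -> `|z.2 - z'.2| <= s ->
  `|f z y - f z' y| <= 2%:R * s / g ^+ 2.

Lemma sqr_norm (x : R) : `|x| ^+ 2 = x ^+ 2.
Proof. by rewrite real_normK // num_real. Qed.

Lemma separated_sqr (z y : T) g : 0 <= g -> separated z y g ->
  g ^+ 2 <= (z.1 - y.1) ^+ 2 + (z.2 - y.2) ^+ 2.
Proof.
move=> g0 [h|h].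
  have := sqr_norm (z.1 - y.1); have := sqr_ge0 (z.2 - y.2);
  have := normr_ge0 (z.1 - y.1); nra.
have := sqr_norm (z.2 - y.2); have := sqr_ge0 (z.1 - y.1);
have := normr_ge0 (z.2 - y.2); nra.
Qed.

(* |Re (1/w)| <= 1/|w| <= g^-1 when |w| >= g, with w = u + i v. *)
Lemma re_inv_bound (u v g : R) : 0 < g -> g ^+ 2 <= u ^+ 2 + v ^+ 2 ->
  `|u / (u ^+ 2 + v ^+ 2)| <= g^-1.
Proof.
move=> g0 hr; set r := u ^+ 2 + v ^+ 2.
have r0 : 0 < r by apply: lt_le_trans hr; rewrite exprn_gt0.
have u_le_r : `|u| * g <= r.
  rewrite /r; have := sqr_ge0 (`|u| - g); have := sqr_norm u;
  have := sqr_ge0 v; nra.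
rewrite normrM normfV (gtr0_norm r0) ler_pdivrMr // -ler_pdivrMl ?invr_gt0 //.
by rewrite invrK mulrC.
Qed.

(* |Re (1/w - 1/w')| <= |w - w'| / (|w| |w'|) <= 2 s / g^2. *)
Lemma re_inv_lipschitz (u v u' v' g s : R) : 0 < g -> 0 <= s ->
  g ^+ 2 <= u ^+ 2 + v ^+ 2 -> g ^+ 2 <= u' ^+ 2 + v' ^+ 2 ->
  `|u - u'| <= s -> `|v - v'| <= s ->
  `|u / (u ^+ 2 + v ^+ 2) - u' / (u' ^+ 2 + v' ^+ 2)| <= 2%:R * s / g ^+ 2.
Proof.
move=> g0 s0 hr hr' hu hv.
set r := u ^+ 2 + v ^+ 2; set r' := u' ^+ 2 + v' ^+ 2.
have r0 : 0 < r by apply: lt_le_trans hr; rewrite exprn_gt0.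
have r0' : 0 < r' by apply: lt_le_trans hr'; rewrite exprn_gt0.
have inv_dist : (u / r - u' / r') ^+ 2 + (v / r - v' / r') ^+ 2 =
    ((u - u') ^+ 2 + (v - v') ^+ 2) / (r * r').
  rewrite /r /r'; field; apply/andP; split; rewrite gt_eqF //.
move: (u / r - u' / r') (v / r - v' / r') inv_dist => A B inv_dist.
have AB_rr : (A ^+ 2 + B ^+ 2) * (r * r') = (u - u') ^+ 2 + (v - v') ^+ 2.
  by rewrite inv_dist mulfVK // mulf_neq0 // gt_eqF.
have g2 : 0 < g ^+ 2 by rewrite exprn_gt0.
have g4_rr : g ^+ 2 * g ^+ 2 <= r * r' by apply: ler_pM => //; apply: ltW.
have A2 : A ^+ 2 * (g ^+ 2 * g ^+ 2) <= 2%:R * s ^+ 2.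
  have : A ^+ 2 * (g ^+ 2 * g ^+ 2) <= A ^+ 2 * (r * r').
    by apply: ler_wpM2l => //; exact: sqr_ge0.
  have := sqr_norm (u - u'); have := sqr_norm (v - v');
  have := normr_ge0 (u - u'); have := normr_ge0 (v - v'); have := sqr_ge0 B.
  nra.
rewrite ler_pdivlMr //.
have := sqr_norm A; have := normr_ge0 A; nra.
Qed.

Lemma cauchy_re_bounded : kernel_bounded (@cauchy_re R).
Proof.
by move=> z y g g0 h; apply: re_inv_bound => //; apply: separated_sqr => //; exact: ltW.
Qed.

Lemma cauchy_re_lipschitz : kernel_lipschitz (@cauchy_re R).
Proof.
move=> z z' y g s g0 s0 h h' d1 d2; apply: re_inv_lipschitz => //.
- by apply: separated_sqr => //; exact: ltW.
- by apply: separated_sqr => //; exact: ltW.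
- by have -> : z.1 - y.1 - (z'.1 - y.1) = z.1 - z'.1 by ring.
- by have -> : z.2 - y.2 - (z'.2 - y.2) = z.2 - z'.2 by ring.
Qed.

(* Im (1/w) = - Re (1/(i conj w)): exchanging the coordinates turns the
   imaginary part into the (negated) real part. *)
Lemma cauchy_im_swap (z y : T) :
  cauchy_im z y = - cauchy_re (z.2, z.1) (y.2, y.1).
Proof. by rewrite /cauchy_im /cauchy_re /= mulNr (addrC ((z.2 - y.2) ^+ 2)). Qed.

Lemma cauchy_im_bounded : kernel_bounded (@cauchy_im R).
Proof.
move=> z y g g0 h; rewrite cauchy_im_swap normrN.
by apply: cauchy_re_bounded => //; case: h; [right|left].
Qed.

Lemma cauchy_im_lipschitz : kernel_lipschitz (@cauchy_im R).
Proof.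
move=> z z' y g s g0 s0 h h' d1 d2.
rewrite !cauchy_im_swap -opprD normrN.
apply: cauchy_re_lipschitz => //=; first by case: h; [right|left].
by case: h'; [right|left].
Qed.

Lemma cmod_le (u v : R) : cmod u v <= `|u| + `|v|.
Proof.
rewrite /cmod -(@ger0_norm _ (`|u| + `|v|)); last by rewrite addr_ge0.
rewrite -sqrtr_sqr ler_sqrt; last exact: sqr_ge0.
have := sqr_norm u; have := sqr_norm v; have := normr_ge0 u; have := normr_ge0 v.
nra.
Qed.

End KernelEstimates.

Section CodedSquares.
Variables (R : realType) (lam : nat -> R) (lambda : R).
Hypothesis lam_bounds : forall n, (0 < n)%N -> 4%:R^-1 <= lam n /\ lam n <= lambda.
Hypothesis lambda_lt_half : lambda < 2%:R^-1.

(* Relative width of the gap between two sibling squares. *)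
Definition margin := 1 - 2%:R * lambda.

Lemma margin_gt0 : 0 < margin.
Proof.
have half : (2%:R : R)^-1 * 2%:R = 1 by rewrite mulVf // pnatr_eq0.
move: lambda_lt_half half; rewrite /margin; set t := (2%:R : R)^-1; nra.
Qed.

Lemma lam_gt0 n : (0 < n)%N -> 0 < lam n.
Proof. by move=> /lam_bounds [h _]; apply: lt_le_trans h; rewrite invr_gt0 ltr0n. Qed.

Lemma lam_le n : (0 < n)%N -> lam n <= lambda.
Proof. by move=> /lam_bounds []. Qed.

Lemma sideS n : side lam n.+1 = side lam n * lam n.+1.
Proof. by rewrite /side big_nat_recr. Qed.

Lemma side_gt0 n : 0 < side lam n.
Proof.
elim: n => [|n IH]; first by rewrite /side big_geq.
by rewrite sideS mulr_gt0 // lam_gt0.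
Qed.

(* The offset of a child square inside its parent is 0 or the parent side
   minus the child side. *)
Lemma offset_eq j : side lam j * (1 - lam j.+1) = side lam j - side lam j.+1.
Proof. by rewrite sideS; ring. Qed.

Lemma side_le k n : (k <= n)%N -> side lam n <= side lam k.
Proof.
elim: n => [|n IH]; first by rewrite leqn0 => /eqP ->.
rewrite leq_eqVlt => /orP [/eqP -> //| lt_kn]; apply: le_trans (IH lt_kn).
have := lam_le (ltn0Sn n); have := side_gt0 n; have := lambda_lt_half.
rewrite sideS; nra.
Qed.

Lemma offset_ge0 j : 0 <= side lam j * (1 - lam j.+1).
Proof. rewrite offset_eq subr_ge0; exact: side_le. Qed.

Definition corner (b : 'I_4 -> R) (w : seq 'I_4) : R :=
  \sum_(k < size w) b (nth ord0 w k) * (side lam k * (1 - lam k.+1)).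

Definition binary (b : 'I_4 -> R) := forall d, b d = 0 \/ b d = 1.

Lemma binary_unit b : binary b -> forall d, 0 <= b d <= 1.
Proof. by move=> bb d; case: (bb d) => ->; rewrite ?lexx ?ler01. Qed.

Lemma bitx_binary : binary (@bitx R).
Proof. by move=> d; rewrite /bitx; case: (odd d); [right|left]. Qed.

Lemma bity_binary : binary (@bity R).
Proof. by move=> d; rewrite /bity; case: (1 < d)%N; [right|left]. Qed.

Lemma digit_bits (du dv : 'I_4) : du <> dv ->
  bitx R du <> bitx R dv \/ bity R du <> bity R dv.
Proof.
rewrite /bitx /bity.
case: du dv => [[|[|[|[|?]]]] ?] [[|[|[|[|?]]]] ?] //= h;
 try (by exfalso; apply: h; apply: val_inj);
 try (by left => /eqP; rewrite ?oner_eq0 // eq_sym oner_eq0);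
 try (by right => /eqP; rewrite ?oner_eq0 // eq_sym oner_eq0).
Qed.

Lemma offsets_bound (b : nat -> R) k n : (forall j, 0 <= b j <= 1) -> (k <= n)%N ->
  0 <= \sum_(k <= j < n) b j * (side lam j * (1 - lam j.+1)) <= side lam k - side lam n.
Proof.
move=> b01; elim: n => [|n IH].
  by rewrite leqn0 => /eqP ->; rewrite big_geq // subrr lexx.
rewrite leq_eqVlt => /orP [/eqP ->| lt_kn]; first by rewrite big_geq // subrr lexx.
have := IH lt_kn; rewrite big_nat_recr //=.
have := b01 n; have := offset_ge0 n; rewrite offset_eq; nra.
Qed.

Lemma corner_take b w k : (k <= size w)%N ->
  corner b w = corner b (take k w) +
     \sum_(k <= j < size w) b (nth ord0 w j) * (side lam j * (1 - lam j.+1)).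
Proof.
move=> hk; rewrite /corner -!(big_mkord xpredT
  (fun j => b (nth ord0 _ j) * (side lam j * (1 - lam j.+1)))).
rewrite size_takel // (big_cat_nat (leq0n k) hk) /=; congr (_ + _).
by apply: eq_big_nat => j /andP [_ hj]; rewrite nth_take.
Qed.

Lemma corner_interval_take b w k x : binary b -> (k <= size w)%N ->
  corner b w <= x <= corner b w + side lam (size w) ->
  corner b (take k w) <= x <= corner b (take k w) + side lam k.
Proof.
move=> bb hk; rewrite (corner_take b hk).
have := offsets_bound (fun j => binary_unit bb (nth ord0 w j)) hk; lra.
Qed.

Lemma square_take w k : (k <= size w)%N -> square lam w `<=` square lam (take k w).
Proof.
move=> hk z [hx hy]; split.
  by have := corner_interval_take bitx_binary hk hx; rewrite size_takel.
by have := corner_interval_take bity_binary hk hy; rewrite size_takel.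
Qed.

Lemma corner_gap b u v k a c : binary b -> size u = size v -> (k < size u)%N ->
  take k u = take k v -> b (nth ord0 u k) = 0 -> b (nth ord0 v k) = 1 ->
  corner b u <= a <= corner b u + side lam (size u) ->
  corner b v <= c <= corner b v + side lam (size v) ->
  side lam k * margin <= c - a.
Proof.
move=> bb huv hk htk hbu hbv.
have hkv : (k < size v)%N by rewrite -huv.
rewrite (corner_take b (ltnW hk)) (corner_take b (ltnW hkv)) htk.
rewrite (big_ltn hk) (big_ltn hkv) /= hbu hbv.
have := offsets_bound (fun j => binary_unit bb (nth ord0 u j)) hk.
have := offsets_bound (fun j => binary_unit bb (nth ord0 v j)) hkv.
rewrite offset_eq sideS -huv /margin.
have := lam_le (ltn0Sn k); have := side_gt0 k; nra.
Qed.

Lemma first_difference (u v : seq 'I_4) : size u = size v -> u <> v ->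
  exists k, [/\ (k < size u)%N, take k u = take k v & nth ord0 u k <> nth ord0 v k].
Proof.
elim: u v => [|a u IH] [|b v] //= [hs] hne.
have [eab|hab] := eqVneq a b; last by exists 0%N; split => //; apply/eqP.
have [|k [h1 h2 h3]] := IH v hs; first by move=> euv; apply: hne; rewrite euv eab.
by exists k.+1; split => //=; rewrite h2 eab.
Qed.

Lemma squares_separated u v j : size u = size v -> u <> v -> take j u = take j v ->
  exists k, [/\ (j <= k)%N, (k < size u)%N, take k u = take k v &
    forall z y, square lam u z -> square lam v y -> separated z y (side lam k * margin)].
Proof.
move=> hs hne hj.
have [k [hk htk hnk]] := first_difference hs hne.
have hjk : (j <= k)%N.
  rewrite leqNgt; apply/negP => hkj; apply: hnk.
  by rewrite -(nth_take _ hkj) hj nth_take.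
have hkv : (k < size v)%N by rewrite -hs.
have gap b a c : binary b -> b (nth ord0 u k) <> b (nth ord0 v k) ->
    corner b u <= a <= corner b u + side lam (size u) ->
    corner b v <= c <= corner b v + side lam (size v) ->
    side lam k * margin <= `|a - c|.
  move=> bb hd ha hc; case: (bb (nth ord0 u k)) => hu.
  - have hv : b (nth ord0 v k) = 1 by case: (bb (nth ord0 v k)) => // e; rewrite hu e in hd.
    by rewrite distrC; apply: le_trans (corner_gap bb hs hk htk hu hv ha hc) _; exact: ler_norm.
  - have hv : b (nth ord0 v k) = 0 by case: (bb (nth ord0 v k)) => // e; rewrite hu e in hd.
    apply: le_trans (corner_gap bb (esym hs) hkv (esym htk) hv hu hc ha) _.
    exact: ler_norm.
exists k; split => // z y [hzx hzy] [hyx hyy].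
case: (digit_bits hnk) => hd; [left; exact: gap bitx_binary hd hzx hyx |
                                right; exact: gap bity_binary hd hzy hyy].
Qed.

Lemma square_inj u v z : size u = size v -> square lam u z -> square lam v z -> u = v.
Proof.
move=> hs hu hv; apply: contrapT => hne.
have h0 : take 0 u = take 0 v by rewrite !take0.
have [k [_ _ _ hsep]] := squares_separated hs hne h0.
have gap_pos : 0 < side lam k * margin := mulr_gt0 (side_gt0 k) margin_gt0.
by case: (hsep z z hu hv); rewrite subrr normr0 leNgt gap_pos.
Qed.

Lemma square_prefix u v z : (size u <= size v)%N ->
  square lam u z -> square lam v z -> u = take (size u) v.
Proof.
move=> hs hu hv; apply: (square_inj (z := z)); last exact: square_take.
  by rewrite size_takel.
exact: hu.
Qed.

Lemma square_corner w : square lam w (cornerx lam w, cornery lam w).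
Proof. by have := side_gt0 (size w); rewrite /square /=; split; lra. Qed.

Lemma square_diam w z z' : square lam w z -> square lam w z' ->
  `|z.1 - z'.1| <= side lam (size w) /\ `|z.2 - z'.2| <= side lam (size w).
Proof.
move=> [/andP[h1 h2] /andP[h3 h4]] [/andP[h5 h6] /andP[h7 h8]].
by split; rewrite ler_norml; apply/andP; split; lra.
Qed.

Lemma inD_sub m n Q P : (m <= n)%N -> inD lam m Q -> inD lam n P -> P `<=` Q ->
  exists w, [/\ size w = n, P = square lam w & Q = square lam (take m w)].
Proof.
move=> hmn [wQ [hq ->]] [w [hw ->]] hsub; exists w; split => //.
have hc := square_corner w.
have hs : (size wQ <= size w)%N by rewrite hq hw.
have := square_prefix hs (hsub _ hc) hc.
by rewrite hq => <-.
Qed.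

Local Notation K := (Kset lam).

Lemma K_code N y : K y -> exists v, size v = N /\ square lam v y.
Proof. by move=> /(_ N) [Q [[v [hv ->]] hQ]]; exists v. Qed.

Lemma K_separated w j y : (j <= size w)%N -> K y -> ~ square lam w y ->
  square lam (take j w) y ->
  exists k, [/\ (j <= k)%N, (k < size w)%N, square lam (take k w) y &
     forall z, square lam w z -> separated z y (side lam k * margin)].
Proof.
move=> hj hK hny hjy.
have [v [hv hy]] := K_code (size w) hK.
have hne : w <> v by move=> ewv; apply: hny; rewrite ewv.
have htj : take j w = take j v.
  have := square_prefix (u := take j w) (v := v) (z := y).
  by rewrite size_takel // hv => ->.
have [k [h1 h2 h3 h4]] := squares_separated (esym hv) hne htj.
exists k; split => //; last by move=> z hz; apply: h4.
by rewrite h3; apply: square_take => //; rewrite hv; exact: ltnW.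
Qed.

Lemma K_root_square y : K y -> square lam [::] y.
Proof. by move=> /(K_code 0) [v [/size0nil -> hy]]. Qed.

End CodedSquares.

Section GeometricSum.
Variables (R : realType) (lam : nat -> R) (lambda : R).
Hypothesis lam_bounds : forall n, (0 < n)%N -> 4%:R^-1 <= lam n /\ lam n <= lambda.
Hypothesis lambda_lt_half : lambda < 2%:R^-1.

(* 4 s_(k+1)^2 <= ratio * s_k^2 with ratio < 1: the weights 4^-k s_k^-2 grow
   geometrically, so their partial sums are dominated by the last term. *)
Definition ratio := 4%:R * lambda ^+ 2.

Definition Dconst := 2%:R / (margin lambda ^+ 2 * (1 - ratio)).

Lemma a_gt0 n : 0 < a_ lam n.
Proof. by rewrite /a_ divr_gt0 // mulr_gt0 ?exprn_gt0 ?ltr0n ?(side_gt0 lam_bounds). Qed.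

Lemma ratio_bounds : 0 <= ratio < 1.
Proof.
have [h1 h2] := lam_bounds (ltn0Sn 0).
have := le_trans h1 h2; move: lambda_lt_half; rewrite /ratio; nra.
Qed.

Lemma Dconst_gt0 : 0 < Dconst.
Proof.
have [_ q1] := andP ratio_bounds; have := margin_gt0 lambda_lt_half.
by move=> e0; rewrite divr_gt0 ?ltr0n // mulr_gt0 ?exprn_gt0 // subr_gt0.
Qed.

Lemma weighted_sum_bound n : 4%:R ^+ n * side lam n ^+ 2 *
   (\sum_(k < n) (4%:R ^+ k * side lam k ^+ 2)^-1) * (1 - ratio) <= ratio.
Proof.
have [q0 q1] := andP ratio_bounds.
elim: n => [|n IH]; first by rewrite big_ord0 mulr0 mul0r.
set X := 4%:R ^+ n * side lam n ^+ 2 in IH *.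
set S := \sum_(k < n) _ in IH *.
set L := 4%:R * lam n.+1 ^+ 2.
have X0 : 0 < X by rewrite mulr_gt0 ?exprn_gt0 ?ltr0n ?(side_gt0 lam_bounds).
have L0 : 0 <= L by rewrite mulr_ge0 ?sqr_ge0.
have Lq : L <= ratio.
  have := lam_gt0 lam_bounds (ltn0Sn n); have := lam_le lam_bounds (ltn0Sn n).
  rewrite /L /ratio; nra.
have -> : 4%:R ^+ n.+1 * side lam n.+1 ^+ 2 *
    (\sum_(k < n.+1) (4%:R ^+ k * side lam k ^+ 2)^-1) = L * (X * S + 1).
  rewrite big_ord_recr /= -/S (sideS lam) /L /X exprS; field.
  by rewrite gt_eqF ?(side_gt0 lam_bounds) // expf_neq0 // pnatr_eq0.
nra.
Qed.

Lemma oscillation_sum_bound n :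
  \sum_(k < n) (2%:R * side lam n / (side lam k * margin lambda) ^+ 2) * (4%:R ^+ k)^-1
   <= Dconst * a_ lam n.
Proof.
have [q0 q1] := andP ratio_bounds.
have e0 := margin_gt0 lambda_lt_half.
have sp := side_gt0 lam_bounds n.
set S := \sum_(k < n) (4%:R ^+ k * side lam k ^+ 2)^-1.
have -> : \sum_(k < n) (2%:R * side lam n / (side lam k * margin lambda) ^+ 2) *
    (4%:R ^+ k)^-1 = 2%:R * side lam n / margin lambda ^+ 2 * S.
  rewrite /S mulr_sumr; apply: eq_bigr => k _.
  have := side_gt0 lam_bounds k => skp.
  by field; rewrite ?expf_neq0 ?mulf_neq0 ?pnatr_eq0 ?gt_eqF.
have := weighted_sum_bound n; rewrite -/S.
set X := 4%:R ^+ n * side lam n ^+ 2 => XS.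
have p4 : 0 < 4%:R ^+ n :> R by rewrite exprn_gt0 // ltr0n.
rewrite -subr_ge0.
have -> : Dconst * a_ lam n - 2%:R * side lam n / margin lambda ^+ 2 * S =
   2%:R / (margin lambda ^+ 2 * (1 - ratio) * (4%:R ^+ n * side lam n)) *
   (1 - X * S * (1 - ratio)).
  rewrite /Dconst /a_ /X; field.
  by rewrite !gt_eqF //= ?subr_gt0 // expf_neq0 // pnatr_eq0.
apply: mulr_ge0; last by rewrite subr_ge0; apply: le_trans XS (ltW q1).
by rewrite divr_ge0 // ltW // !mulr_gt0 // ?exprn_gt0 // subr_gt0.
Qed.

End GeometricSum.

Section FiniteMeasureIntegrals.
Context d (T : measurableType d) (R : realType).
Variable mu : {finite_measure set T -> \bar R}.

Definition average (A : set T) (g : T -> R) : R :=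
  (fine (mu A))^-1 * \int[mu]_(x in A) g x.

Lemma integrable_bounded (D : set T) (g : T -> R) (M : R) : measurable D ->
  measurable_fun D g -> (forall x, D x -> `|g x| <= M) ->
  mu.-integrable D (EFin \o g).
Proof.
move=> mD mg hg.
apply: (le_integrable mD _ _ (finite_measure_integrable_cst mu M mD)).
- exact/measurable_EFinP.
- by move=> x Dx /=; rewrite lee_fin; apply: le_trans (hg x Dx) _; exact: ler_norm.
Qed.

Lemma norm_Rintegral_bound (D : set T) (g : T -> R) (M : R) : measurable D ->
  measurable_fun D g -> (forall x, D x -> `|g x| <= M) ->
  `|\int[mu]_(x in D) g x| <= M * fine (mu D).
Proof.
move=> mD mg hg.
apply: le_trans (le_normr_Rintegral mD (integrable_bounded mD mg hg)) _.
rewrite -Rintegral_cst //; apply: le_Rintegral => //.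
- apply: (integrable_bounded (M := M)) => //.
    by apply: measurableT_comp => //; exact: normr_measurable.
  by move=> x Dx; rewrite normr_id hg.
- exact: finite_measure_integrable_cst.
Qed.

Lemma average_near (A : set T) (G : T -> R) (M0 c M : R) : measurable A ->
  0 < fine (mu A) -> measurable_fun A G -> (forall z, A z -> `|G z| <= M0) ->
  (forall z, A z -> `|G z - c| <= M) -> `|average A G - c| <= M.
Proof.
move=> mA hA mG hb hM.
have iG := integrable_bounded mA mG hb.
have ic : mu.-integrable A (EFin \o cst c) by exact: finite_measure_integrable_cst.
have -> : average A G - c = (fine (mu A))^-1 * \int[mu]_(x in A) (G x - c).
  by rewrite /average RintegralB // Rintegral_cst //; field; exact: lt0r_neq0.
rewrite normrM ger0_norm ?invr_ge0 ?(ltW hA) // ler_pdivrMl // mulrC.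
by apply: norm_Rintegral_bound => //; exact: measurable_funB.
Qed.

Lemma averageB (A : set T) (G1 G2 : T -> R) (M1 M2 : R) : measurable A ->
  measurable_fun A G1 -> measurable_fun A G2 ->
  (forall z, A z -> `|G1 z| <= M1) -> (forall z, A z -> `|G2 z| <= M2) ->
  average A G1 - average A G2 = average A (fun z => G1 z - G2 z).
Proof.
move=> mA m1 m2 b1 b2.
have i1 := integrable_bounded mA m1 b1; have i2 := integrable_bounded mA m2 b2.
by rewrite /average RintegralB // mulrBr.
Qed.

Lemma Rintegral_null (B N : set T) (g : T -> R) (M : R) :
  measurable B -> measurable N -> mu N = 0 -> measurable_fun setT g ->
  (forall y, B y -> ~ N y -> `|g y| <= M) ->
  mu.-integrable B (EFin \o g) /\
  \int[mu]_(y in B) g y = \int[mu]_(y in B `\` N) g y.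
Proof.
move=> mB mN N0 mg hg.
have mBN : measurable (B `\` N) by exact: measurableD.
have iBN : mu.-integrable (B `\` N) (EFin \o g).
  apply: (integrable_bounded (M := M)) => //; first exact: measurable_funS mg.
  by move=> y [By Ny]; apply: hg.
have iB : mu.-integrable B (EFin \o g).
  apply/(negligible_integrable mN mB _ N0) => //.
  by apply/measurable_EFinP; exact: measurable_funS mg.
by split => //; rewrite /Rintegral; congr fine; exact: negligible_integral.
Qed.

Lemma Rintegral_bound_ae (g : T -> R) (B N : set T) (M : R) :
  measurable_fun setT g -> measurable B -> measurable N -> mu N = 0 -> 0 <= M ->
  (forall y, B y -> ~ N y -> `|g y| <= M) ->
  `|\int[mu]_(y in B) g y| <= M * fine (mu B).
Proof.
move=> mg mB mN N0 M0 hb.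
have [_ ->] := Rintegral_null mB mN N0 mg hb.
have mBN : measurable (B `\` N) by exact: measurableD.
apply: le_trans (norm_Rintegral_bound mBN (measurable_funS _ _ mg) _) _ => //.
  by move=> y [By Ny]; apply: hb.
apply: ler_wpM2l => //; apply: fine_le; try exact: fin_num_measure.
by apply: le_measure => //; rewrite inE.
Qed.

Definition step_fun (c : nat -> R) (S : nat -> set T) n y :=
  \sum_(k < n) c k * \1_(S k) y.

Lemma step_fun_measurable c S n : (forall k, measurable (S k)) ->
  measurable_fun setT (step_fun c S n).
Proof.
move=> mS; apply: measurable_sum => k.
by apply: measurable_funM => //; exact: measurable_indic.
Qed.

Lemma step_fun_bounds c S n y : (forall k, 0 <= c k) ->
  0 <= step_fun c S n y <= \sum_(k < n) c k.
Proof.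
move=> c0; apply/andP; split.
  by apply: sumr_ge0 => k _; apply: mulr_ge0 => //; rewrite indicE ler0n.
by apply: ler_sum => k _; rewrite indicE; case: (y \in S k); rewrite ?mulr1 ?mulr0.
Qed.

Lemma step_fun_ge c S n k y : (forall k, 0 <= c k) ->
  (k < n)%N -> S k y -> c k <= step_fun c S n y.
Proof.
move=> c0 hk hy; rewrite /step_fun (bigD1 (Ordinal hk)) //= indicE mem_set //.
rewrite mulr1 lerDl; apply: sumr_ge0 => i _; apply: mulr_ge0 => //.
Qed.

Lemma Rintegral_step_fun D c S n : measurable D -> (forall k, measurable (S k)) ->
  (forall k, 0 <= c k) ->
  \int[mu]_(y in D) step_fun c S n y <= \sum_(k < n) c k * fine (mu (S k)).
Proof.
move=> mD mS c0; elim: n => [|n IH].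
  rewrite big_ord0 /step_fun.
  under eq_Rintegral do rewrite big_ord0.
  by rewrite Rintegral_cst // mul0r.
rewrite big_ord_recr /=.
have -> : \int[mu]_(y in D) step_fun c S n.+1 y =
   \int[mu]_(y in D) (step_fun c S n y + c n * \1_(S n) y).
  by apply: eq_Rintegral => y _; rewrite /step_fun big_ord_recr.
have indic_bound M y : 0 <= M -> `|M * \1_(S n) y| <= M.
  by move=> M0; rewrite indicE; case: (y \in S n); rewrite ?mulr1 ?mulr0 ?normr0 ?ger0_norm.
have mI : measurable_fun D (fun y => \1_(S n) y : R) by exact: measurable_indic.
have i1 : mu.-integrable D (EFin \o step_fun c S n).
  apply: (integrable_bounded (M := \sum_(k < n) c k)) => //.
    exact: measurable_funS (step_fun_measurable c n mS).
  by move=> y _; have /andP [h1 h2] := step_fun_bounds S n y c0; rewrite ger0_norm.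
have i2 : mu.-integrable D (EFin \o (fun y => \1_(S n) y : R)).
  by apply: (integrable_bounded (M := 1)) => // y _; rewrite -[X in `|X|]mul1r indic_bound.
rewrite RintegralD //; last first.
  apply: (integrable_bounded (M := c n)) => //; first exact: measurable_funM.
  by move=> y _; exact: indic_bound.
apply: lerD => //; rewrite RintegralZl //; apply: ler_wpM2l => //.
rewrite /Rintegral integral_indic //.
apply: fine_le; [|exact: fin_num_measure | exact: measureIl].
by apply: fin_num_measure; exact: measurableI.
Qed.

Lemma Rintegral_diff_ae (f : T -> T -> R) (z z' : T) (B N : set T) (n : nat)
    (c : nat -> R) (S : nat -> set T) (M : R) :
  measurable_fun setT (f z) -> measurable_fun setT (f z') ->
  measurable B -> measurable N -> mu N = 0 -> (forall k, measurable (S k)) ->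
  (forall k, 0 <= c k) ->
  (forall y, B y -> ~ N y -> `|f z y| <= M) ->
  (forall y, B y -> ~ N y -> `|f z' y| <= M) ->
  (forall y, B y -> ~ N y -> `|f z y - f z' y| <= step_fun c S n y) ->
  `|\int[mu]_(y in B) f z y - \int[mu]_(y in B) f z' y| <=
     \sum_(k < n) c k * fine (mu (S k)).
Proof.
move=> mf mf' mB mN N0 mS c0 b1 b2 bdiff.
have mBN : measurable (B `\` N) by exact: measurableD.
have [_ ->] := Rintegral_null mB mN N0 mf b1.
have [_ ->] := Rintegral_null mB mN N0 mf' b2.
have [i1 _] := Rintegral_null mBN mN N0 mf (fun y By _ => b1 y By.1 By.2).
have [i2 _] := Rintegral_null mBN mN N0 mf' (fun y By _ => b2 y By.1 By.2).
rewrite -RintegralB //.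
apply: le_trans (le_normr_Rintegral mBN (integrableB mBN i1 i2)) _.
apply: le_trans (Rintegral_step_fun n mBN mS c0).
apply: le_Rintegral => //.
- apply: (integrable_bounded (M := M + M)) => //.
    apply: measurable_funS (measurableT_comp (@normr_measurable _ _)
      (measurable_funB mf mf')) => //.
  move=> y [By Ny]; rewrite normr_id; apply: le_trans (ler_normB _ _) _.
  by apply: lerD; [exact: b1 | exact: b2].
- apply: (integrable_bounded (M := \sum_(k < n) c k)) => //.
    exact: measurable_funS (step_fun_measurable c n mS).
  by move=> y _; have /andP [h1 h2] := step_fun_bounds S n y c0; rewrite ger0_norm.
- by move=> y [By Ny]; exact: bdiff.
Qed.

Lemma parametric_Rintegral_measurable (f : T -> T -> R) (B : set T) :
  measurable B -> measurable_fun setT (fun p : T * T => f p.1 p.2) ->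
  measurable_fun setT (fun z => \int[mu]_(y in B) f z y).
Proof.
move=> mB mf.
pose G := fun p : T * T => (f p.1 p.2 * \1_B p.2)%:E.
have mG : measurable_fun setT G.
  apply/measurable_EFinP; apply: measurable_funM => //.
  apply: measurableT_comp; [exact: measurable_indic | exact: measurable_snd].
have -> : (fun z => \int[mu]_(y in B) f z y) =
    (fun z => fine (fubini_F mu (G^\+) z - fubini_F mu (G^\-) z)).
  apply/funext => z; rewrite /Rintegral integral_mkcond integralE.
  congr (fine (_ - _)); apply: eq_integral => y _;
    rewrite /fubini_F ?funeposE ?funenegE /G /patch indicE;
    by case: (y \in B); rewrite ?mulr1 ?mulr0.
apply: measurableT_comp; first exact: fine_measurable.
apply: emeasurable_funB.
  apply: measurable_fun_fubini_tonelli_F; first exact: measurable_funepos.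
  by move=> x; exact: funepos_ge0.
apply: measurable_fun_fubini_tonelli_F; first exact: measurable_funeneg.
by move=> x; exact: funeneg_ge0.
Qed.

End FiniteMeasureIntegrals.

Section KernelMeasurability.
Variable R : realType.
Local Notation T := (R * R)%type.

(* x |-> x^-1 (with 0^-1 = 0) is Borel: continuous off 0, constant on 0. *)
Lemma inv_measurable : measurable_fun setT (@GRing.inv R).
Proof.
have -> : [set: R] = ~` [set 0] `|` [set 0] by rewrite setUC setUCr.
apply/measurable_funU => //; first exact: measurableC.
split.
  apply: open_continuous_measurable_fun; first by rewrite openC; exact: closed_eq.
  by move=> x; rewrite inE => hx; apply: inv_continuous; apply/eqP.
apply: (eq_measurable_fun (fun _ : R => 0 : R)); last exact: measurable_cst.
by move=> x; rewrite inE => ->; rewrite invr0.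
Qed.

(* Both parts of the Cauchy kernel have the shape w / (u^2 + v^2). *)
Lemma ratio_measurable (dD : measure_display) (U : measurableType dD)
    (u v w : U -> R) :
  measurable_fun setT u -> measurable_fun setT v -> measurable_fun setT w ->
  measurable_fun setT (fun p => w p / (u p ^+ 2 + v p ^+ 2)).
Proof.
move=> mu mv mw; apply: measurable_funM => //.
apply: measurableT_comp; first exact: inv_measurable.
by apply: measurable_funD; apply: measurable_funX.
Qed.

Lemma coord_diff_measurable (i : T -> R) : measurable_fun setT i ->
  measurable_fun setT (fun p : T * T => i p.1 - i p.2).
Proof.
move=> mi; apply: measurable_funB.
  exact: measurableT_comp mi measurable_fst.
exact: measurableT_comp mi measurable_snd.
Qed.

Lemma cauchy_re_measurable :
  measurable_fun setT (fun p : T * T => cauchy_re p.1 p.2).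
Proof.
have m1 := coord_diff_measurable (measurable_fst (T1 := R) (T2 := R)).
have m2 := coord_diff_measurable (measurable_snd (T1 := R) (T2 := R)).
exact: (ratio_measurable m1 m2 m1).
Qed.

Lemma cauchy_im_measurable :
  measurable_fun setT (fun p : T * T => cauchy_im p.1 p.2).
Proof.
have m1 := coord_diff_measurable (measurable_fst (T1 := R) (T2 := R)).
have m2 := coord_diff_measurable (measurable_snd (T1 := R) (T2 := R)).
have m3 : measurable_fun setT (fun p : T * T => - (p.1.2 - p.2.2)).
  by apply: measurableT_comp; [exact: oppr_measurable | exact: m2].
exact: (ratio_measurable m1 m2 m3).
Qed.

End KernelMeasurability.

Section CantorMeasure.
Variables (R : realType) (lam : nat -> R) (lambda : R).
Hypothesis lam_bounds : forall n, (0 < n)%N -> 4%:R^-1 <= lam n /\ lam n <= lambda.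
Hypothesis lambda_lt_half : lambda < 2%:R^-1.
Variable mu : probability (R * R)%type R.
Hypothesis mu_D : forall (n : nat) (Q : set (R * R)), inD lam n Q ->
  mu Q = ((4%:R ^+ n)^-1)%:E.
Local Notation T := (R * R)%type.

Lemma square_measurable w : measurable (square lam w).
Proof.
have interval a b : [set x : R | a <= x <= b] = `[a, b]%classic.
  by apply/seteqP; split => x /=; rewrite in_itv.
have -> : square lam w =
    [set x | cornerx lam w <= x <= cornerx lam w + side lam (size w)] `*`
    [set x | cornery lam w <= x <= cornery lam w + side lam (size w)].
  by apply/seteqP; split => z.
by rewrite !interval; exact: measurableX.
Qed.

Lemma mu_square w : fine (mu (square lam w)) = (4%:R ^+ size w)^-1.
Proof.
have hD : inD lam (size w) (square lam w) by exists w.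
by rewrite (mu_D hD).
Qed.

Lemma mu_square_gt0 w : 0 < fine (mu (square lam w)).
Proof. by rewrite mu_square invr_gt0 exprn_gt0 // ltr0n. Qed.

Definition generation N := [set z : T | exists w, size w = N /\ square lam w z].

Definition code_square N (i : 'I_#|{: N.-tuple 'I_4}|) := square lam (tval (enum_val i)).

Lemma bigsetU_ord n (F : 'I_n -> set T) z :
  (\big[setU/set0]_(i < n) F i) z <-> exists i, F i z.
Proof.
rewrite -bigcup_seq; split => [[i _ h]|[i h]]; first by exists i.
by exists i => //=; rewrite mem_index_enum.
Qed.

Lemma generation_bigsetU N :
  generation N = \big[setU/set0]_(i < #|{: N.-tuple 'I_4}|) code_square i.
Proof.
apply/seteqP; split => z.
  move=> [w [hw hz]]; apply/bigsetU_ord.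
  have hw' : size w == N by apply/eqP.
  by exists (enum_rank (Tuple hw')); rewrite /code_square enum_rankK.
move=> /bigsetU_ord [i hi]; exists (tval (enum_val i)); split => //.
exact: size_tuple.
Qed.

Lemma generation_measurable N : measurable (generation N).
Proof.
rewrite generation_bigsetU; apply: bigsetU_measurable => i _.
exact: square_measurable.
Qed.

Lemma mu_generation N : mu (generation N) = 1%E.
Proof.
rewrite generation_bigsetU measure_bigsetU_ord //; last first.
- move=> i j _ _ [z [hi hj]]; apply: enum_val_inj; apply: val_inj.
  by apply: (square_inj lam_bounds lambda_lt_half (z := z)); rewrite ?size_tuple.
- by move=> i; exact: square_measurable.
have -> : \sum_(i < #|{: N.-tuple 'I_4}|) mu (code_square i) =
    \sum_(i < #|{: N.-tuple 'I_4}|) ((4%:R ^+ N)^-1)%:E.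
  apply: eq_bigr => i _; rewrite /code_square (@mu_D N) //.
  by exists (tval (enum_val i)); rewrite size_tuple.
rewrite sumEFin sumr_const card_ord card_tuple card_ord; congr EFin.
by rewrite -[_ *+ (4 ^ N)%N]mulr_natr natrX mulVf // expf_neq0 // pnatr_eq0.
Qed.

Lemma K_bigcap : Kset lam = \bigcap_N generation N.
Proof.
apply/seteqP; split => z.
  by move=> hz N _; have [Q [[w [hw ->]] hQ]] := hz N; exists w.
move=> hz N; have [w [hw h]] := hz N I; exists (square lam w); split => //.
by exists w.
Qed.

Lemma K_measurable : measurable (Kset lam).
Proof.
rewrite K_bigcap; apply: bigcapT_measurable => N; exact: generation_measurable.
Qed.

(* mu is carried by K: each generation has full measure. *)
Lemma mu_notK : mu (~` Kset lam) = 0%E.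
Proof.
have mu_notgen N : mu (~` generation N) = 0%E.
  rewrite -setTD (measureD measurableT (generation_measurable N)); last first.
    by rewrite -ge0_fin_numE ?measure_ge0 //; exact: fin_num_measure.
  rewrite setTI; transitivity (1%E - 1%E : \bar R)%E; last by rewrite subee.
  by congr (_ - _)%E; [exact: probability_setT | exact: mu_generation].
apply/eqP; rewrite eq_le measure_ge0 andbT K_bigcap setC_bigcap.
apply: le_trans (measure_sigma_subadditive _ _ _ _) _.
- by move=> N; apply: measurableC; exact: generation_measurable.
- by apply: bigcup_measurable => N _; apply: measurableC; exact: generation_measurable.
- exact: subset_refl.
by rewrite eseries0 // => i _ _; exact: mu_notgen.
Qed.

End CantorMeasure.

Section PotentialEstimates.
Variables (R : realType) (lam : nat -> R) (lambda : R).
Hypothesis lam_bounds : forall n, (0 < n)%N -> 4%:R^-1 <= lam n /\ lam n <= lambda.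
Hypothesis lambda_lt_half : lambda < 2%:R^-1.
Variable mu : probability (R * R)%type R.
Hypothesis mu_D : forall (n : nat) (Q : set (R * R)), inD lam n Q ->
  mu Q = ((4%:R ^+ n)^-1)%:E.
Local Notation T := (R * R)%type.
Variable f : T -> T -> R.
Hypothesis f_measurable : measurable_fun setT (fun p : T * T => f p.1 p.2).
Hypothesis f_bounded : kernel_bounded f.
Hypothesis f_lipschitz : kernel_lipschitz f.

Local Notation K := (Kset lam).
Local Notation e := (margin lambda).
Local Notation sq := (square lam).

Definition potential (B : set T) (z : T) : R := \int[mu]_(y in B) f z y.

Lemma f_measurable1 z : measurable_fun setT (f z).
Proof. exact: (measurable_fun_pair2 z f_measurable). Qed.

Lemma potential_measurable B : measurable B -> measurable_fun setT (potential B).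
Proof. by move=> mB; exact: parametric_Rintegral_measurable. Qed.

Lemma gap_gt0 k : 0 < side lam k * e.
Proof. exact: mulr_gt0 (side_gt0 lam_bounds k) (margin_gt0 lambda_lt_half). Qed.

Lemma inv_gap_ge0 k : 0 <= (side lam k * e)^-1.
Proof. by rewrite invr_ge0; exact: ltW (gap_gt0 k). Qed.

Lemma inv_gap_le k n : (k <= n)%N -> (side lam k * e)^-1 <= (side lam n * e)^-1.
Proof.
move=> hkn; have e0 := margin_gt0 lambda_lt_half.
have hs := side_le lam_bounds lambda_lt_half hkn.
by rewrite lef_pV2 ?posrE ?gap_gt0 // ler_pM2r.
Qed.

Lemma kernel_outside_bound w z y : sq w z -> K y -> ~ sq w y ->
  `|f z y| <= (side lam (size w) * e)^-1.
Proof.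
move=> hz hK hny.
have h0 : sq (take 0 w) y by rewrite take0; exact: K_root_square.
have [k [_ hk _ hsep]] := K_separated lam_bounds lambda_lt_half (leq0n _) hK hny h0.
apply: le_trans (f_bounded (gap_gt0 k) (hsep z hz)) _.
exact: inv_gap_le (ltnW hk).
Qed.

Definition outside w (B : set T) := forall y, B y -> ~ sq w y.

(* For z in the square coded by w, the integrand of the potential of a set
   outside that square is bounded on K, and mu is carried by K. *)
Lemma potential_restrict w B z : measurable B -> outside w B -> sq w z ->
  mu.-integrable B (EFin \o f z) /\ potential B z = potential (B `&` K) z.
Proof.
move=> mB hB hz; rewrite /potential.
have [iB ->] := Rintegral_null mB (measurableC (K_measurable lam))
  (mu_notK lam_bounds lambda_lt_half mu_D) (f_measurable1 z)
  (fun y By nK => kernel_outside_bound hz (contrapT nK) (hB y By)).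
by rewrite setDE setCK.
Qed.

Lemma potential_setU w B1 B2 z : measurable B1 -> measurable B2 ->
  [disjoint B1 & B2] -> outside w B1 -> outside w B2 -> sq w z ->
  potential (B1 `|` B2) z = potential B1 z + potential B2 z.
Proof.
move=> m1 m2 dis h1 h2 hz.
have mU : measurable (B1 `|` B2) by exact: measurableU.
have [iU _] := potential_restrict mU
  (fun y => (@or_ind _ _ _ (h1 y) (h2 y))) hz.
exact: Rintegral_setU.
Qed.

Lemma potential_bound w B z : measurable B -> outside w B -> sq w z ->
  `|potential B z| <= (side lam (size w) * e)^-1 * fine (mu B).
Proof.
move=> mB hB hz.
apply: (Rintegral_bound_ae (f_measurable1 z) mB
  (measurableC (K_measurable lam))
  (mu_notK lam_bounds lambda_lt_half mu_D) (inv_gap_ge0 _)).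
by move=> y By nK; exact: kernel_outside_bound hz (contrapT nK) (hB y By).
Qed.

(* A point y of K outside the
   square, separated from it at generation k, contributes 2 s_n / (e s_k)^2
   and the mass of such points is at most 4^-k. *)
Lemma potential_oscillation w B z z' : measurable B -> outside w B ->
  sq w z -> sq w z' ->
  `|potential B z - potential B z'| <= Dconst lambda * a_ lam (size w).
Proof.
move=> mB hB hz hz'; set n := size w.
pose c k := 2%:R * side lam n / (side lam k * e) ^+ 2.
pose S k := sq (take k w).
have c0 k : 0 <= c k.
  by rewrite /c divr_ge0 ?sqr_ge0 // mulr_ge0 // ltW // (side_gt0 lam_bounds).
have bnd z1 : sq w z1 -> forall y, B y -> ~ (~` K) y ->
    `|f z1 y| <= (side lam n * e)^-1.
  by move=> hz1 y By nK; exact: kernel_outside_bound hz1 (contrapT nK) (hB y By).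
apply: le_trans (Rintegral_diff_ae (c := c) (S := S) (f_measurable1 z)
  (f_measurable1 z') mB (measurableC (K_measurable lam))
  (mu_notK lam_bounds lambda_lt_half mu_D) (fun k => square_measurable _ _) c0
  (bnd z hz) (bnd z' hz') _) _.
  move=> y By /contrapT hK.
  have h0 : sq (take 0 w) y by rewrite take0; exact: K_root_square.
  have [k [_ hk hyk hsep]] :=
    K_separated lam_bounds lambda_lt_half (leq0n n) hK (hB y By) h0.
  have [d1 d2] := square_diam hz hz'.
  apply: le_trans (f_lipschitz (gap_gt0 k) (ltW (side_gt0 lam_bounds n))
    (hsep z hz) (hsep z' hz') d1 d2) _.
  exact: (step_fun_ge (c := c) (S := S) c0 hk hyk).
apply: le_trans (oscillation_sum_bound lam_bounds lambda_lt_half n).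
rewrite le_eqVlt; apply/orP; left; apply/eqP; apply: eq_bigr => k _.
by rewrite /S (mu_square mu_D) size_takel // ltnW.
Qed.

Lemma average_potential_near w A B z0 : measurable A -> 0 < fine (mu A) ->
  A `<=` sq w -> measurable B -> outside w B -> sq w z0 ->
  `|average mu A (potential B) - potential B z0| <= Dconst lambda * a_ lam (size w).
Proof.
move=> mA hA sA mB hB hz0.
apply: (average_near (M0 := (side lam (size w) * e)^-1 * fine (mu B))) => //.
- exact: measurable_funS (potential_measurable mB).
- by move=> z /sA hz; exact: potential_bound.
- by move=> z /sA hz; exact: potential_oscillation.
Qed.

(* The potential of the sibling region Rt \ R of a child square R, seen from
   R, is at most e^-1 a_n: its points are separated at generation n. *)
Lemma sibling_potential_bound w n z : size w = n.+1 -> sq w z ->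
  `|potential (sq (take n w) `\` sq w) z| <= e^-1 * a_ lam n.
Proof.
move=> hw hz.
have hnw : (n <= size w)%N by rewrite hw.
have mRt := square_measurable lam (take n w).
have mB : measurable (sq (take n w) `\` sq w).
  by apply: measurableD => //; exact: square_measurable.
have mu_B : fine (mu (sq (take n w) `\` sq w)) <= (4%:R ^+ n)^-1.
  rewrite -{2}(size_takel hnw) -(mu_square mu_D).
  apply: fine_le; try exact: fin_num_measure.
  exact: le_measure (mem_set mB) (mem_set mRt) (@subDsetl _ _ _).
have ginv0 := inv_gap_ge0 n.
apply: le_trans (Rintegral_bound_ae (f_measurable1 z) mB
  (measurableC (K_measurable lam))
  (mu_notK lam_bounds lambda_lt_half mu_D) ginv0 _) _.
  move=> y [hyt hny] /contrapT hK.
  have [k [hnk hk _ hsep]] := K_separated lam_bounds lambda_lt_half hnw hK hny hyt.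
  have -> : n = k by apply/eqP; rewrite eqn_leq hnk -ltnS -hw hk.
  exact: f_bounded (gap_gt0 k) (hsep z hz).
apply: le_trans (ler_wpM2l ginv0 mu_B) _.
have e0 := margin_gt0 lambda_lt_half; have s0 := side_gt0 lam_bounds n.
rewrite /a_ le_eqVlt; apply/orP; left; apply/eqP; field.
by rewrite !gt_eqF ?exprn_gt0 ?ltr0n.
Qed.

Lemma avg_iint_average A B : avg_iint mu A B f = average mu A (potential B).
Proof. by []. Qed.

(* Estimate (i) for the kernel f: S_R - S_{Q,R} and S_Q are both averages of
   the potential of K \ Q, over R and over Q. *)
Lemma estimate_descendant m n Q P : (m < n)%N -> inD lam m Q -> inD lam n P ->
  P `<=` Q ->
  `|avg_iint mu P (K `\` P) f - avg_iint mu Q (K `\` Q) f - avg_iint mu P (Q `\` P) f|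
    <= 2%:R * Dconst lambda * a_ lam m.
Proof.
move=> hmn hQ hP sPQ.
have [w [hw eP eQ]] := inD_sub lam_bounds lambda_lt_half (ltnW hmn) hQ hP sPQ.
subst P Q; rewrite !avg_iint_average.
have hm : size (take m w) = m by rewrite size_takel // hw ltnW.
have z0P := square_corner lam_bounds w.
have mK := K_measurable lam.
have mP := square_measurable lam w.
have mQ := square_measurable lam (take m w).
have mKQ : measurable (K `\` sq (take m w)) by exact: measurableD.
have mKP : measurable (K `\` sq w) by exact: measurableD.
have mQP : measurable (sq (take m w) `\` sq w) by exact: measurableD.
have mQPK : measurable ((sq (take m w) `\` sq w) `&` K) by exact: measurableI.
have split_K z : sq w z -> potential (K `\` sq w) z -
    potential (sq (take m w) `\` sq w) z = potential (K `\` sq (take m w)) z.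
  move=> hz.
  have [_ ->] := potential_restrict mQP (fun y => @proj2 _ _) hz.
  have -> : K `\` sq w = (K `\` sq (take m w)) `|` ((sq (take m w) `\` sq w) `&` K).
    apply/seteqP; split => y /=.
      by move=> [hK hy]; case: (pselect (sq (take m w) y)) => h; [right|left].
    by move=> [[hK hq]|[[hq hy] hK]]; split => // /sPQ.
  rewrite (potential_setU mKQ mQPK _ _ _ hz) ?addrK //.
  - by apply/disj_setPS => y [[_ h1] [[h2 _] _]].
  - by move=> y [_ hy] /sPQ.
  - by move=> y [[_ hy] _].
have diff_P : average mu (sq w) (potential (K `\` sq w)) -
    average mu (sq w) (potential (sq (take m w) `\` sq w)) =
    average mu (sq w) (potential (K `\` sq (take m w))).
  rewrite (averageB mu (M1 := (side lam (size w) * e)^-1 * fine (mu (K `\` sq w)))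
    (M2 := (side lam (size w) * e)^-1 * fine (mu (sq (take m w) `\` sq w)))) //.
  - by rewrite /average; congr (_ * _); apply: eq_Rintegral => z /set_mem /split_K.
  - exact: measurable_funS (potential_measurable mKP).
  - exact: measurable_funS (potential_measurable mQP).
  - by move=> z hz; apply: potential_bound => // y [].
  - by move=> z hz; apply: potential_bound => // y [].
set c := potential (K `\` sq (take m w)) (cornerx lam w, cornery lam w).
have near A : measurable A -> 0 < fine (mu A) -> A `<=` sq (take m w) ->
    `|average mu A (potential (K `\` sq (take m w))) - c| <= Dconst lambda * a_ lam m.
  move=> mA hA sA; rewrite -{2}hm.
  by apply: average_potential_near => //; [move=> y [] | exact: sPQ].
rewrite addrAC diff_P; apply: le_trans (ler_distD c _ _) _.
have -> : 2%:R * Dconst lambda * a_ lam m =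
  Dconst lambda * a_ lam m + Dconst lambda * a_ lam m by ring.
by rewrite [X in _ + X]distrC; apply: lerD; apply: near => //; exact: mu_square_gt0.
Qed.

(* Estimate (ii) for the kernel f: S_{Q,R} averages over R the potentials of
   Q \ Rt and of the sibling region Rt \ R, S_{Q,Rt} averages the first one
   over Rt. *)
Lemma estimate_child m n Q Pt P : (m <= n)%N -> inD lam m Q -> inD lam n Pt ->
  inD lam n.+1 P -> P `<=` Pt -> Pt `<=` Q ->
  `|avg_iint mu P (Q `\` P) f - avg_iint mu Pt (Q `\` Pt) f| <=
     (e^-1 + 2%:R * Dconst lambda) * a_ lam n.
Proof.
move=> _ [wQ [_ eQ]] hPt hP sPPt sPtQ.
have [w [hw eP ePt]] := inD_sub lam_bounds lambda_lt_half (leqnSn n) hPt hP sPPt.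
subst P Pt Q; rewrite !avg_iint_average.
have hn : size (take n w) = n by rewrite size_takel // hw.
have z0P := square_corner lam_bounds w.
have mQ := square_measurable lam wQ.
have mP := square_measurable lam w.
have mPt := square_measurable lam (take n w).
have mQPt : measurable (sq wQ `\` sq (take n w)) by exact: measurableD.
have mQP : measurable (sq wQ `\` sq w) by exact: measurableD.
have mPtP : measurable (sq (take n w) `\` sq w) by exact: measurableD.
have outPt : outside (take n w) (sq wQ `\` sq (take n w)) by move=> y [].
set c := potential (sq wQ `\` sq (take n w)) (cornerx lam w, cornery lam w).
have nearP : `|average mu (sq w) (potential (sq wQ `\` sq w)) - c| <=
    Dconst lambda * a_ lam n + e^-1 * a_ lam n.
  apply: (average_near (M0 := (side lam (size w) * e)^-1 * fine (mu (sq wQ `\` sq w)))).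
  - exact: mP.
  - exact: mu_square_gt0.
  - exact: measurable_funS (potential_measurable mQP).
  - by move=> z hz; apply: potential_bound => // y [].
  move=> z hz.
  have -> : sq wQ `\` sq w = (sq wQ `\` sq (take n w)) `|` (sq (take n w) `\` sq w).
    apply/seteqP; split => y /=.
      by move=> [hq hs]; case: (pselect (sq (take n w) y)) => h; [right|left].
    by move=> [[hq ht]|[ht hs]]; split => //; [move=> /sPPt | exact: sPtQ].
  rewrite (potential_setU mQPt mPtP _ _ _ hz).
  - rewrite addrAC; apply: le_trans (ler_normD _ _) _; apply: lerD.
      by have := potential_oscillation mQPt outPt (sPPt _ hz) (sPPt _ z0P); rewrite hn.
    exact: sibling_potential_bound hw hz.
  - by apply/disj_setPS => y [[_ h1] [h2 _]].
  - by move=> y [_ hy] /sPPt.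
  - by move=> y [].
have nearPt : `|average mu (sq (take n w)) (potential (sq wQ `\` sq (take n w))) - c|
    <= Dconst lambda * a_ lam n.
  have := average_potential_near mPt (mu_square_gt0 mu_D _) (@subset_refl _ _)
    mQPt outPt (sPPt _ z0P).
  by rewrite hn.
apply: le_trans (ler_distD c _ _) _; rewrite [X in _ + X]distrC.
have -> : (e^-1 + 2%:R * Dconst lambda) * a_ lam n =
  Dconst lambda * a_ lam n + e^-1 * a_ lam n + Dconst lambda * a_ lam n by ring.
exact: lerD.
Qed.

End PotentialEstimates.
(* Both estimates hold for the real and the imaginary part of the Cauchy
   kernel, and |u + i v| <= |u| + |v|. *)
Theorem mainTheorem7 (R : realType) (lambda : R)
  (hlam1 : 4%:R^-1 <= lambda) (hlam2 : lambda < 2%:R^-1) :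
  exists C : R, 0 < C /\
  forall (lam : nat -> R),
    (forall n : nat, (0 < n)%N -> 4%:R^-1 <= lam n /\ lam n <= lambda) ->
  forall (mu : probability (R * R)%type R),
    (forall (n : nat) (Q : set (R * R)), inD lam n Q ->
        mu Q = ((4%:R ^+ n)^-1)%:E) ->
  (forall (m n : nat) (Q Rs : set (R * R)),
     (m < n)%N -> inD lam m Q -> inD lam n Rs -> Rs `<=` Q ->
     cmod (S_re mu lam Rs - S_re mu lam Q - SQR_re mu Q Rs)
          (S_im mu lam Rs - S_im mu lam Q - SQR_im mu Q Rs) <= C * a_ lam m) /\
  (forall (m n : nat) (Q Rt Rs : set (R * R)),
     (m <= n)%N -> inD lam m Q -> inD lam n Rt -> inD lam n.+1 Rs ->
     Rs `<=` Rt -> Rt `<=` Q ->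
     cmod (SQR_re mu Q Rs - SQR_re mu Q Rt)
          (SQR_im mu Q Rs - SQR_im mu Q Rt) <= C * a_ lam n).
Proof.
have const_bounds : forall n, (0 < n)%N -> 4%:R^-1 <= lambda /\ lambda <= lambda.
  by move=> n _; split.
have e0 : 0 <= (margin lambda)^-1 by rewrite invr_ge0 ltW // margin_gt0.
have D0 := Dconst_gt0 const_bounds hlam2.
set C0 := (margin lambda)^-1 + 2%:R * Dconst lambda.
have twice x y a : x <= C0 * a -> y <= C0 * a -> x + y <= 2%:R * C0 * a.
  by move=> hx hy; rewrite -mulrA mulr_natl mulr2n; exact: lerD.
exists (2%:R * C0); split; first by rewrite mulr_gt0 // ltr_wpDl // mulr_gt0.
move=> lam hl mu hmu; split.
- move=> m n Q P hmn hQ hP sPQ; apply: le_trans (cmod_le _ _) _.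
  have le_C0 : 2%:R * Dconst lambda * a_ lam m <= C0 * a_ lam m.
    by rewrite ler_wpM2r ?(ltW (a_gt0 hl m)) // lerDr.
  apply: twice; apply: le_trans le_C0.
  + exact (estimate_descendant hl hlam2 hmu (@cauchy_re_measurable R)
      (@cauchy_re_bounded R) (@cauchy_re_lipschitz R) hmn hQ hP sPQ).
  + exact (estimate_descendant hl hlam2 hmu (@cauchy_im_measurable R)
      (@cauchy_im_bounded R) (@cauchy_im_lipschitz R) hmn hQ hP sPQ).
- move=> m n Q Pt P hmn hQ hPt hP sPPt sPtQ; apply: le_trans (cmod_le _ _) _.
  apply: twice.
  + exact (estimate_child hl hlam2 hmu (@cauchy_re_measurable R)
      (@cauchy_re_bounded R) (@cauchy_re_lipschitz R) hmn hQ hPt hP sPPt sPtQ).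
  + exact (estimate_child hl hlam2 hmu (@cauchy_im_measurable R)
      (@cauchy_im_bounded R) (@cauchy_im_lipschitz R) hmn hQ hPt hP sPPt sPtQ).
Qed.
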